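(* Let $G$ be a cubic graph, let $M$ be a perfect matching cut of $G$, and let $C$ be a $6$-vertex cycle of $G$. If at least three outgoing edges of $V(C)$ belong to $M$, then all outgoing edges of $V(C)$ belong to $M$.
   Context: All graphs are finite, simple and undirected; a graph is cubic if every vertex has exactly three neighbours. A cutset of $G$ is a set $M \subseteq E(G)$ for which there is a bipartition $X \uplus Y = V(G)$ into two nonempty sets such that $M$ is exactly the set of edges with one endpoint in $X$ and one in $Y$. A perfect matching cut is a perfect matching (a set of edges covering every vertex exactly once) that is also a cutset. For $U \subseteq V(G)$, the outgoing edges of $U$ are the edges of $G$ with exactly one endpoint in $U$. *)

From mathcomp Require Import all_boot.
Set Implicit Arguments. Unset Strict Implicit. Unset Printing Implicit Defensive.

Definition simple_graph (T : finType) (g : rel T) : Prop :=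
  symmetric g /\ irreflexive g.

Definition edges (T : finType) (g : rel T) : {set {set T}} :=
  [set [set p.1; p.2] | p in [set p : T * T | g p.1 p.2]].

Definition cubic (T : finType) (g : rel T) : Prop :=
  forall x : T, #|[set y | g x y]| = 3.

Definition outgoing (T : finType) (g : rel T) (U : {set T}) : {set {set T}} :=
  [set m in edges g | #|m :&: U| == 1].

Definition perfect_matching (T : finType) (g : rel T) (M : {set {set T}}) : Prop :=
  M \subset edges g /\ forall x : T, #|[set m in M | x \in m]| = 1.

Definition cutset (T : finType) (g : rel T) (M : {set {set T}}) : Prop :=
  exists X : {set T}, [/\ X != set0, ~: X != set0 & M = outgoing g X].

Definition perfect_matching_cut (T : finType) (g : rel T) (M : {set {set T}}) : Prop :=
  perfect_matching g M /\ cutset g M.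

Definition cycle6 (T : finType) (g : rel T) (c : 'I_6 -> T) : Prop :=
  injective c /\ forall i : 'I_6, g (c i) (c (ordS i)).

From mathcomp Require Import all_boot.
Set Implicit Arguments. Unset Strict Implicit. Unset Printing Implicit Defensive.

(* Double counting over the perfect matching M: every vertex of the cycle C is
   matched either by an outgoing edge of V(C) or, together with another vertex
   of C, by an edge inside V(C), so #(outgoing edges in M) + 2 #(cycle edges in
   M) <= 6.  The cycle edges in M are exactly those crossing the cut, and a
   closed walk crosses a cut an even number of times; with at least three
   outgoing edges in M, no cycle edge is in M.  Finally, for an outgoing edge
   c_i y the neighbours of c_i are c_(i-1), c_(i+1) and y by cubicity, so c_i
   is matched through y. *)

Lemma sum_nat_of_bool (I : finType) (Q P : pred I) :
  \sum_(i | Q i) P i = #|[set i | Q i && P i]|.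
Proof. by rewrite -big_mkcondr sum1dep_card. Qed.

Lemma card_setI_sum (T : finType) (B U : {set T}) :
  #|B :&: U| = \sum_(x in B) (x \in U).
Proof. by rewrite sum_nat_of_bool; congr #|_|; apply/setP => x; rewrite !inE. Qed.

Lemma card_set2I (T : finType) (x y : T) (U : {set T}) :
  x != y -> #|[set x; y] :&: U| = (x \in U) + (y \in U).
Proof. by move=> nxy; rewrite card_setI_sum big_setU1 ?big_set1 // inE. Qed.

Lemma odd_card_cyclic_changes n (a : 'I_n -> bool) :
  odd #|[set i | a i != a (ordS i)]| = false.
Proof.
have changeE (x y : bool) : (x != y) + (x && y).*2 = x + y by case: x; case: y.
have shiftE : \sum_i a (ordS i) = \sum_i a i := esym (reindex_inj (@ordS_inj n)).
have : \sum_i (a i != a (ordS i)) + (\sum_i (a i && a (ordS i))).*2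
       = (\sum_i a i).*2.
  rewrite -mul2n big_distrr -big_split /=.
  under eq_bigr do rewrite mul2n changeE.
  by rewrite big_split shiftE -addnn.
by rewrite sum_nat_of_bool => /(congr1 odd); rewrite oddD !odd_double addbF.
Qed.

Lemma ordS2_neq n (i : 'I_n) : 2 < n -> ordS (ordS i) != i.
Proof.
move=> n_gt2; apply/eqP => /(congr1 val) /=; rewrite -addn1 modnDml addn1 -addn2.
rewrite -{2}(modn_small (ltn_ord i)) => /eqP.
rewrite eqn_mod_dvd ?leq_addr // addKn.
by move=> /(dvdn_leq (isT : 0 < 2)); rewrite leqNgt n_gt2.
Qed.

Lemma ordS_neq_ord_pred n (i : 'I_n) : 2 < n -> ordS i != ord_pred i.
Proof.
move=> n_gt2; apply: contraTneq (ordS2_neq i n_gt2) => ->.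
by rewrite ord_predK eqxx.
Qed.

Section Graph.

Variables (T : finType) (g : rel T).
Hypotheses (g_sym : symmetric g) (g_irr : irreflexive g).

Lemma adj_neq x y : g x y -> x != y.
Proof. by apply: contraTneq => ->; rewrite g_irr. Qed.

Lemma edgesP e : reflect (exists x y, g x y /\ e = [set x; y]) (e \in edges g).
Proof.
apply: (iffP imsetP) => [[[x y]] | [x [y [gxy ->]]]].
  by rewrite inE => gxy ->; exists x, y.
by exists (x, y); rewrite ?inE.
Qed.

Lemma mem_edges x y : g x y -> [set x; y] \in edges g.
Proof. by move=> gxy; apply/edgesP; exists x, y. Qed.

Lemma mem_outgoing U x y :
  g x y -> ([set x; y] \in outgoing g U) = ((x \in U) != (y \in U)).
Proof.
move=> gxy; rewrite inE mem_edges // card_set2I ?adj_neq //.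
by case: (x \in U); case: (y \in U).
Qed.

Lemma outgoingP U e :
  e \in outgoing g U ->
  exists x y, [/\ g x y, x \in U, y \notin U & e = [set x; y]].
Proof.
case/setIdP => /edgesP[x [y [gxy ->]]]; rewrite card_set2I ?adj_neq //.
case xU: (x \in U); case yU: (y \in U) => // _; first by exists x, y; rewrite yU.
by exists y, x; rewrite g_sym xU setUC.
Qed.

Lemma card_edgeI U e :
  e \in edges g -> #|e :&: U| = (#|e :&: U| == 1) + (e \subset U).*2.
Proof.
case/edgesP => x [y [gxy ->]]; rewrite card_set2I ?adj_neq // subUset !sub1set.
by case: (x \in U); case: (y \in U).
Qed.

Lemma cubic_adj_mem x a b d w : cubic g ->
  a != b -> a != d -> b != d -> g x a -> g x b -> g x d -> g x w ->
  w \in [set a; b; d].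
Proof.
move=> g3 ab ad bd gxa gxb gxd gxw.
suff -> : [set a; b; d] = [set y | g x y] by rewrite inE.
apply/eqP; rewrite eqEcard g3 setUC cardsU1 cards2 !inE negb_or.
rewrite eq_sym ad eq_sym bd ab; apply/andP; split=> //.
by apply/subsetP => y; rewrite !inE => /orP[|/orP[]] /eqP ->.
Qed.

Section PerfectMatching.

Variable M : {set {set T}}.
Hypothesis M_pm : perfect_matching g M.

Lemma perfect_matching_partner x : exists2 y, g x y & [set x; y] \in M.
Proof.
case: M_pm => M_edges /(_ x)/eqP/cards1P[e Ex].
have : e \in [set e in M | x \in e] by rewrite Ex set11.
rewrite inE => /andP[eM xe].
have /edgesP[a [b [gab Eab]]] := subsetP M_edges e eM.
move: xe eM; rewrite Eab !inE => /orP[] /eqP -> abM; first by exists b.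
by exists a; rewrite 1?g_sym // setUC.
Qed.

Lemma perfect_matching_sum U : \sum_(e in M) #|e :&: U| = #|U|.
Proof.
under eq_bigr do rewrite setIC card_setI_sum.
rewrite exchange_big /= -sum1_card; apply: eq_bigr => x _.
by rewrite sum_nat_of_bool; case: M_pm => _ ->.
Qed.

Lemma perfect_matching_card U :
  #|outgoing g U :&: M| + #|[set e in M | e \subset U]|.*2 = #|U|.
Proof.
case: M_pm => M_edges _; rewrite -perfect_matching_sum.
rewrite (eq_bigr _ (fun e eM => card_edgeI U (subsetP M_edges e eM))).
rewrite big_split /= -(big_morph double doubleD double0) !sum_nat_of_bool.
congr (_ + _); apply: eq_card => e; rewrite !inE andbC.
by case eM: (e \in M); rewrite //= (subsetP M_edges _ eM).
Qed.

End PerfectMatching.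

Section Cycle.

Variables (n : nat) (c : 'I_n -> T).
Hypotheses (n_gt2 : 2 < n) (c_inj : injective c).
Hypothesis c_adj : forall i, g (c i) (c (ordS i)).

Definition cycle_edge i := [set c i; c (ordS i)].

Lemma cycle_edge_inj : injective cycle_edge.
Proof.
move=> i j Eij; have /set2P[/c_inj // | /c_inj i_Sj] : c i \in cycle_edge j.
  by rewrite -Eij set21.
have /set2P[/c_inj Si_j | /c_inj/ordS_inj //] : c (ordS i) \in cycle_edge j.
  by rewrite -Eij set22.
by have := ordS2_neq i n_gt2; rewrite Si_j -i_Sj eqxx.
Qed.

Lemma cycle_edge_sub i : cycle_edge i \subset [set c j | j : 'I_n].
Proof. by rewrite subUset !sub1set !imset_f. Qed.

Lemma odd_card_cut_cycle_edges M :
  cutset g M -> odd #|[set i | cycle_edge i \in M]| = false.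
Proof.
case=> X [_ _ ->]; rewrite -(odd_card_cyclic_changes (fun i => c i \in X)).
congr (odd _); apply: eq_card => i.
by rewrite [LHS]inE [RHS]inE (mem_outgoing X (c_adj i)).
Qed.

Lemma card_matched_cycle_edges M : perfect_matching g M ->
  #|outgoing g [set c i | i : 'I_n] :&: M|
    + #|[set i | cycle_edge i \in M]|.*2 <= n.
Proof.
move=> M_pm.
have card_C : #|[set c i | i : 'I_n]| = n by rewrite card_imset ?card_ord.
rewrite -[n in _ <= n]card_C -(perfect_matching_card M_pm) leq_add2l leq_double.
rewrite -(card_imset _ cycle_edge_inj); apply/subset_leq_card/subsetP => e.
by case/imsetP => i; rewrite inE => iM ->; rewrite inE iM cycle_edge_sub.
Qed.

Lemma outgoing_cycle_sub_matching M : cubic g -> perfect_matching g M ->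
  (forall i, cycle_edge i \notin M) -> outgoing g [set c i | i : 'I_n] \subset M.
Proof.
move=> g3 M_pm noM; apply/subsetP => _ /outgoingP[x [y [gxy xC yC ->]]].
case/imsetP: xC gxy => i _ -> gxy.
have [w gw wM] := perfect_matching_partner M_pm (c i).
have c_ne_y j : c j != y by apply: contraNneq yC => <-; rewrite imset_f.
have g_pred : g (c i) (c (ord_pred i)) by rewrite g_sym -{2}(ord_predK i) c_adj.
have S_ne_pred : c (ordS i) != c (ord_pred i).
  by rewrite (inj_eq c_inj) ordS_neq_ord_pred.
have := cubic_adj_mem g3 S_ne_pred (c_ne_y _) (c_ne_y _) (c_adj i) g_pred gxy gw.
rewrite !inE => /orP[/orP[]|] /eqP Ew; rewrite Ew // in wM.
  by move: (noM i); rewrite /cycle_edge wM.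
by move: (noM (ord_pred i)); rewrite /cycle_edge ord_predK setUC wM.
Qed.

End Cycle.
End Graph.

Theorem lemma5 (T : finType) (g : rel T) (M : {set {set T}}) (c : 'I_6 -> T) :
  simple_graph g -> cubic g -> perfect_matching_cut g M -> cycle6 g c ->
  3 <= #|outgoing g [set c i | i : 'I_6] :&: M| ->
  outgoing g [set c i | i : 'I_6] \subset M.
Proof.
move=> [g_sym g_irr] g3 [M_pm M_cut] [c_inj c_adj] out_ge3.
have n_gt2 : 2 < 6 by [].
have card_le := card_matched_cycle_edges g_irr n_gt2 c_inj M_pm.
have card_even := odd_card_cut_cycle_edges g_irr c_adj M_cut.
have card0 : #|[set i | cycle_edge c i \in M]| = 0.
  (* one cycle edge in M is excluded by parity, two or more by [card_le] *)
  move: card_le card_even; case: #|[set i | _ \in M]| => [|[|k]] // card_le.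
  by have := leq_trans (leq_add out_ge3 (leqnn _)) card_le.
apply: (outgoing_cycle_sub_matching g_sym g_irr n_gt2 c_inj c_adj g3 M_pm) => i.
by move/eqP: card0; rewrite cards_eq0 => /eqP/setP/(_ i); rewrite !inE => ->.
Qed.
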